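(* Let $\mathcal{H}^-_{A_{n-1}}$ be the degenerate spin affine Hecke algebra of type $A_{n-1}$. Let $\gamma=(\gamma_1,\dots,\gamma_\ell)$ be a composition of $n$ with $n-\ell$ even, and let $\mu$ be the partition of $n$ obtained by reordering the parts of $\gamma$. If $\mu$ has an even part, then $t_\gamma\in[\mathcal{H}^-_{A_{n-1}},\mathcal{H}^-_{A_{n-1}}]$; if all parts of $\mu$ are odd, then $t_\gamma-\epsilon t_\mu\in[\mathcal{H}^-_{A_{n-1}},\mathcal{H}^-_{A_{n-1}}]$ for some $\epsilon\in\{1,-1\}$.
   Context: $\mathbb{C}S_n^-$ is generated by $t_1,\dots,t_{n-1}$ with $t_i^2=1$, $t_it_{i+1}t_i=t_{i+1}t_it_{i+1}$, $(t_it_j)^2=-1$ for $|i-j|>1$. $\mathcal{H}^-_{A_{n-1}}$ is generated by $b_1,\dots,b_n$ (with $b_ib_j=-b_jb_i$ for $i\ne j$) and $\mathbb{C}S_n^-$, subject to $t_ib_i+b_{i+1}t_i=1$ and $t_jb_i+b_it_j=0$ ($i\ne j,j+1$). $[H,H]$ is the linear span of all $hh'-h'h$. For a composition $\gamma$ (sequence of positive integers summing to $n$; a partition is a weakly decreasing one), $t_\gamma=T_1T_2\cdots T_\ell$ where, with $a_k=\gamma_1+\dots+\gamma_{k-1}$, $T_k=t_{a_k+1}t_{a_k+2}\cdots t_{a_k+\gamma_k-1}$ (empty product $1$ if $\gamma_k=1$); thus $t_\gamma$ is a product of $n-\ell$ generators. $t_\mu$ is defined in the same way for the composition $\mu$.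 *)

From HB Require Import structures.
From mathcomp Require Import all_boot all_order all_algebra.
From mathcomp Require Import Rstruct complex.
Set Implicit Arguments. Unset Strict Implicit. Unset Printing Implicit Defensive.
Import Order.TTheory GRing.Theory Num.Theory.
Local Open Scope ring_scope.

Definition CC : fieldType := complex Rdefinitions.R.

Section SpinHecke.
Variable A : algType CC.

(* Elements t_1..t_{n-1} (t : nat -> A, only indices 1..n-1 matter) and
   b_1..b_n (b : nat -> A, only indices 1..n matter) satisfy the defining
   relations of the degenerate spin affine Hecke algebra H^-_{A_{n-1}}. *)
Definition spin_hecke_rel (n : nat) (t b : nat -> A) : Prop :=
  (forall i, (1 <= i <= n.-1)%N -> t i * t i = 1) /\
  (forall i, (1 <= i)%N -> (i.+1 <= n.-1)%N ->
      t i * t i.+1 * t i = t i.+1 * t i * t i.+1) /\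
  (forall i j, (1 <= i <= n.-1)%N -> (1 <= j <= n.-1)%N ->
      (i.+1 < j)%N || (j.+1 < i)%N -> (t i * t j) ^+ 2 = -1) /\
  (forall i j, (1 <= i <= n)%N -> (1 <= j <= n)%N -> i != j ->
      b i * b j = - (b j * b i)) /\
  (forall i, (1 <= i <= n.-1)%N -> t i * b i + b i.+1 * t i = 1) /\
  (forall i j, (1 <= i <= n)%N -> (1 <= j <= n.-1)%N -> i != j -> i != j.+1 ->
      t j * b i + b i * t j = 0).

Definition in_comm_span (v : A) : Prop :=
  exists s : seq (CC * (A * A)),
    v = \sum_(p <- s) p.1 *: (p.2.1 * p.2.2 - p.2.2 * p.2.1).

Fixpoint t_comp_from (t : nat -> A) (a : nat) (g : seq nat) : A :=
  match g with
  | [::] => 1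
  | k :: g' => (\prod_(a.+1 <= j < a + k) t j) * t_comp_from t (a + k) g'
  end.

Definition t_comp (t : nat -> A) (g : seq nat) : A := t_comp_from t 0 g.

End SpinHecke.

Definition is_composition (n : nat) (g : seq nat) : bool :=
  all (fun k => 0 < k)%N g && (sumn g == n).

Definition comp_sort (g : seq nat) : seq nat := sort geq g.

(* Write t_gamma as the product of the blocks T_k, one for each part. Generators with
   distant indices anticommute, so two products of generators with disjoint, separated
   supports commute up to the sign (-1)^(product of their lengths).

   If gamma has an even part x, then t_gamma = X T Y where T, the block of x, has odd
   length x - 1, and Y X has length n - l - (x - 1), odd as well. Hence T (Y X) = - (Y X) T,
   and 2 X T Y = [X, T Y] - [Y, X T].

   Two adjacent blocks can be exchanged up to sign by conjugating with an explicit word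
   in the generators (a lift of the permutation moving one block past the other), so
   t_gamma is conjugate to +-t_mu, and t_gamma -+ t_mu is a commutator. The sign found this
   way might depend on the algebra; running the argument in the product of two algebras
   shows that one sign works for both, hence for all. *)

From Stdlib Require Import Setoid Morphisms Classical.
From HB Require Import structures.
From mathcomp Require Import all_boot all_order all_algebra.
From mathcomp Require Import Rstruct complex zify.
Import GRing.Theory Num.Theory.
Local Open Scope ring_scope.
Set Implicit Arguments. Unset Strict Implicit.

Definition sign_eq (A : pzRingType) (x y : A) := exists b : bool, x = (-1) ^+ b * y.
Notation "x =± y" := (sign_eq x y) (at level 70, no associativity).

Section SignedEquality.
Variable A : pzRingType.
Implicit Types x y z : A.

Lemma sign_eq_refl x : x =± x. Proof. by exists false; rewrite mul1r. Qed.

Lemma sign_eq_sym x y : x =± y -> y =± x.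
Proof. by case=> b ->; exists b; rewrite signrMK. Qed.

Lemma sign_eq_trans x y z : x =± y -> y =± z -> x =± z.
Proof. by case=> b -> [c ->]; exists (b (+) c); rewrite signr_addb mulrA. Qed.

Lemma sign_eq_sign (k : nat) x : (-1) ^+ k * x =± x.
Proof. by exists (odd k); rewrite signr_odd. Qed.

Lemma sign_eq_mul x x' y y' : x =± x' -> y =± y' -> x * y =± x' * y'.
Proof.
case=> b -> [c ->]; exists (b (+) c).
by rewrite signr_addb -!mulrA; congr (_ * _); rewrite !mulrA (commr_sign x').
Qed.

End SignedEquality.

#[export] Instance sign_eq_Equivalence (A : pzRingType) : Equivalence (@sign_eq A).
Proof. split; [exact: sign_eq_refl | exact: sign_eq_sym | exact: sign_eq_trans]. Qed.

#[export] Instance mul_sign_eq_Proper (A : pzRingType) :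
  Proper (@sign_eq A ==> @sign_eq A ==> @sign_eq A) *%R.
Proof. by move=> x x' hx y y' hy; apply: sign_eq_mul. Qed.

#[export] Hint Resolve sign_eq_refl : core.

Definition between (lo hi i : nat) := (lo < i < hi)%N.
Definition far (i j : nat) := (i.+1 < j)%N || (j.+1 < i)%N.

Lemma iota_between lo k : all (between lo (lo + k)) (iota lo.+1 k.-1).
Proof. by apply/allP => i; rewrite mem_iota /between; lia. Qed.

Lemma perm_eq_ind_swap (T : eqType) (R : seq T -> seq T -> Prop) :
  (forall s, R s s) ->
  (forall s1 s2 s3, R s1 s2 -> R s2 s3 -> R s1 s3) ->
  (forall x s1 s2, R s1 s2 -> R (x :: s1) (x :: s2)) ->
  (forall x y s, R [:: x, y & s] [:: y, x & s]) ->
  forall s1 s2, perm_eq s1 s2 -> R s1 s2.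
Proof.
move=> Rrefl Rtrans Rcons Rswap.
have Rmove x l r : R (x :: l ++ r) (l ++ x :: r).
  by elim: l => [|y l IH] /=; [apply: Rrefl | apply: Rtrans (Rswap x y _) (Rcons y _ _ IH)].
elim=> [|x s1 IH] s2; first by rewrite perm_sym => /perm_nilP ->.
move=> hperm; have xs2 : x \in s2 by rewrite -(perm_mem hperm) mem_head.
case/splitPr: s2 / xs2 hperm => l r hperm.
apply: Rtrans (Rcons x _ _ (IH _ _)) (Rmove x l r).
by rewrite -(perm_cons x) (perm_trans hperm) // (perm_catCA l [:: x] r).
Qed.

Section SpinSymmetricGroup.
Variables (A : pzRingType) (n : nat) (t : nat -> A).
Hypothesis t_sq : forall i, (0 < i < n)%N -> t i * t i = 1.
Hypothesis t_braid : forall i, (0 < i)%N -> (i.+1 < n)%N ->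
  t i * t i.+1 * t i = t i.+1 * t i * t i.+1.
Hypothesis t_anti : forall i j, (0 < i)%N -> (j < n)%N -> (i.+1 < j)%N ->
  t i * t j = - (t j * t i).

Local Notation gen := (between 0 n).

Definition word (s : seq nat) : A := \prod_(i <- s) t i.

Lemma word_nil : word [::] = 1. Proof. exact: big_nil. Qed.
Lemma word_cons i s : word (i :: s) = t i * word s. Proof. exact: big_cons. Qed.
Lemma word_seq1 i : word [:: i] = t i. Proof. exact: big_seq1. Qed.
Lemma word_cat s1 s2 : word (s1 ++ s2) = word s1 * word s2. Proof. exact: big_cat. Qed.

Lemma word_revK s : all gen s -> word (rev s) * word s = 1.
Proof.
elim: s => [|i s IH] /=; first by rewrite word_nil mulr1.
case/andP=> gi gs; rewrite rev_cons -cats1 word_cat word_seq1 word_cons.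
by rewrite -mulrA (mulrA (t i)) t_sq // mul1r IH.
Qed.

Lemma word_Krev s : all gen s -> word s * word (rev s) = 1.
Proof. by move=> gs; rewrite -{1}(revK s) word_revK // all_rev. Qed.

Lemma t_far_anti i j : gen i -> gen j -> far i j -> t i * t j = - (t j * t i).
Proof.
rewrite /between /far => /andP[i0 iN] /andP[j0 jN] /orP[h|h]; first exact: t_anti.
by rewrite (t_anti j0 iN h) opprK.
Qed.

Lemma word_far j s : gen j -> all gen s -> all (far j) s ->
  t j * word s = (-1) ^+ size s * (word s * t j).
Proof.
move=> gj; elim: s => [|i s IH] /= => [_ _|/andP[gi gs] /andP[fji fjs]].
  by rewrite word_nil expr0 !mul1r mulr1.
rewrite word_cons mulrA t_far_anti // mulNr.
rewrite -mulrA IH // mulrA (commr_sign (t i)) exprS mulN1r.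
by rewrite !mulNr !mulrA.
Qed.

Lemma word_commute s s' : all gen s -> all gen s' -> allrel far s s' ->
  word s * word s' = (-1) ^+ (size s * size s') * (word s' * word s).
Proof.
move=> + gs'; elim: s => [|i s IH] /=; first by rewrite word_nil expr0 !mul1r mulr1.
case/andP=> gi gs; rewrite allrel_consl => /andP[fis fss'].
rewrite word_cons -mulrA IH // (mulrA (t i)) (commr_sign (t i)) -(mulrA _ (t i)).
rewrite (mulrA (t i)) (word_far gi gs' fis) mulSn addnC exprD.
by rewrite !mulrA.
Qed.

Lemma word_sign_commute s s' : all gen s -> all gen s' -> allrel far s s' ->
  word s * word s' =± word s' * word s.
Proof. by move=> gs gs' fss'; rewrite word_commute // sign_eq_sign. Qed.

Lemma word_sign_commute_between lo hi lo' hi' s s' :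
  (hi <= lo' <= hi')%N -> (hi' <= n)%N -> all (between lo hi) s -> all (between lo' hi') s' ->
  word s * word s' =± word s' * word s.
Proof.
move=> hlo' hin hs hs'; apply: word_sign_commute.
- by apply: sub_all hs => i; rewrite /between; lia.
- by apply: sub_all hs' => i; rewrite /between; lia.
- by apply/allrelP => i j /(allP hs) + /(allP hs'); rewrite /between /far; lia.
Qed.

Local Notation conj_gen u i j := (u * t i =± t j * u).

Lemma conj_gen_mul u v i j k : conj_gen u i j -> conj_gen v j k -> conj_gen (v * u) i k.
Proof. by move=> hu hv; rewrite -mulrA hu mulrA hv mulrA. Qed.

Lemma conj_gen_far j s : gen j -> all gen s -> all (far j) s -> conj_gen (word s) j j.
Proof. by move=> gj gs fjs; rewrite word_far // sign_eq_sign. Qed.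

Lemma conj_gen_far_between lo hi j s : (hi <= n)%N -> all (between lo hi) s -> gen j ->
  (j < lo)%N || (hi < j)%N -> conj_gen (word s) j j.
Proof.
move=> hin hs gj hj; apply: conj_gen_far => //;
  by apply/allP => i /(allP hs); rewrite /between /far; lia.
Qed.

Lemma conj_gen_braid i : (0 < i)%N -> (i.+1 < n)%N -> conj_gen (t i.+1 * t i) i.+1 i.
Proof. by move=> i0 iN; rewrite -t_braid // !mulrA. Qed.

Lemma conj_gen_map u f g (l : seq nat) : {in l, forall x, conj_gen u (f x) (g x)} ->
  u * word (map f l) =± word (map g l) * u.
Proof.
elim: l => [|x l IH] hl /=; first by rewrite !word_nil mulr1 mul1r.
rewrite !word_cons mulrA (hl x (mem_head x l)) -!mulrA IH // => y yl.
by apply: hl; rewrite inE yl orbT.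
Qed.

Lemma all_gen_iota c k : (0 < c)%N -> (c + k <= n)%N -> all gen (iota c k).
Proof. by move=> c0 ck; apply/allP => i; rewrite mem_iota /between; lia. Qed.

Lemma conj_gen_iota c k i : (0 < c)%N -> (c + k <= n)%N -> (c <= i)%N -> (i.+2 <= c + k)%N ->
  conj_gen (word (iota c k)) i i.+1.
Proof.
move=> c0 ckn ci ik; set r := (c + k - i.+2)%N.
have -> : iota c k = iota c (i - c) ++ [:: i, i.+1 & iota i.+2 r].
  by rewrite -[in LHS](_ : i - c + (2 + r) = k)%N ?iotaD /= ?subnKC ?addn2 //; lia.
have gi : gen i by rewrite /between; lia.
have gR : all gen (iota i.+2 r) by apply: all_gen_iota; lia.
have hR : conj_gen (word (iota i.+2 r)) i i.
  by apply: conj_gen_far => //; apply/allP => x; rewrite mem_iota /far; lia.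
rewrite word_cat; apply: (@conj_gen_mul _ (word (iota c (i - c)))); last first.
  apply: conj_gen_far; [rewrite /between; lia | apply: all_gen_iota; lia |].
  by apply/allP => x; rewrite mem_iota /far; lia.
rewrite !word_cons -!mulrA hR !mulrA t_braid //; lia.
Qed.

Definition pair_word (c p : nat) : A := \prod_(0 <= r < p) (t (c + r).+1 * t (c + r)).

Lemma conj_gen_pair_word c p : (0 < c)%N -> (c + p < n)%N -> conj_gen (pair_word c p) (c + p) c.
Proof.
move=> c0; elim: p => [|p IH] cpn; first by rewrite /pair_word big_geq // addn0 mulr1 mul1r.
rewrite /pair_word big_nat_recr //= -/(pair_word c p) addnS.
by apply: conj_gen_mul (conj_gen_braid _ _) (IH _); lia.
Qed.

Lemma iota_pair_word c p : (0 < c)%N -> (c + p < n)%N ->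
  word (iota c.+1 p) * word (iota c p) =± pair_word c p.
Proof.
move=> c0; elim: p => [|p IH] cpn; first by rewrite /pair_word big_geq // !word_nil mulr1.
rewrite -(addn1 p) !iotaD !word_cat !word_seq1 addn1 /pair_word big_nat_recr //= -/(pair_word c p).
have hX : conj_gen (word (iota c p)) (c.+1 + p) (c.+1 + p).
  apply: conj_gen_far; [rewrite /between; lia | apply: all_gen_iota; lia |].
  by apply/allP => x; rewrite mem_iota /far; lia.
rewrite -!mulrA (mulrA (t _)) -hX -!mulrA (mulrA (word _)) IH ?addSn //; lia.
Qed.

Lemma conj_gen_iota_pair c p : (0 < c)%N -> (c + p < n)%N ->
  conj_gen (word (iota c.+1 p) * word (iota c p)) (c + p) c.
Proof. by move=> c0 cpn; rewrite iota_pair_word //; apply: conj_gen_pair_word. Qed.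

(* [word (shuffle a p q)] lifts the permutation of a+1, ..., a+p+q that moves the first p
   points past the last q: conjugation by it sends t_(a+i) to +-t_(a+q+i) and t_(a+p+j) to
   +-t_(a+j). *)
Fixpoint shuffle (a p k : nat) : seq nat :=
  if k is k'.+1 then iota (a + k) p ++ shuffle a p k' else [::].

Lemma shuffleD a p k m : shuffle a p (k + m) = shuffle (a + k) p m ++ shuffle a p k.
Proof. by elim: m => [|m IH]; rewrite ?addn0 // addnS /= IH catA -addnS addnA. Qed.

Lemma shuffle_between a p k : all (between a (a + k + p)) (shuffle a p k).
Proof.
elim: k => [|k IH] //=; rewrite all_cat; apply/andP; split.
  by apply/allP => i; rewrite mem_iota /between; lia.
by apply: sub_all IH => i; rewrite /between; lia.
Qed.

Section Shuffle.
Variables a p q : nat.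
Hypothesis apqn : (a + p + q <= n)%N.

Lemma conj_gen_shuffle_low i k : (0 < i < p)%N -> (k <= q)%N ->
  conj_gen (word (shuffle a p k)) (a + i) (a + i + k).
Proof.
move=> ip; elim: k => [|k IH] kq /=; first by rewrite word_nil addn0 mulr1 mul1r.
rewrite word_cat (addnS (a + i)); apply: conj_gen_mul (IH _) _; first lia.
by apply: conj_gen_iota; lia.
Qed.

Lemma conj_gen_shuffle_high j : (0 < j < q)%N ->
  conj_gen (word (shuffle a p q)) (a + p + j) (a + j).
Proof.
case: j => [|j] // jq; rewrite -(subnKC jq) shuffleD -addn2 shuffleD /= cats0 !word_cat.
(* Only the factors of index j.+1 and j.+2 touch t_(a+p+j.+1); together they form a
   pair word, and all other factors have distant support. *)
apply: conj_gen_mul; last first.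
  apply: (conj_gen_far_between _ (shuffle_between _ _ _)); rewrite /between; lia.
apply: conj_gen_mul (conj_gen_far_between _ (shuffle_between _ _ _) _ _) _;
  rewrite /between; try lia.
have -> : (a + j + 2 = (a + j.+1).+1)%N by lia.
have -> : (a + j + 1 = a + j.+1)%N by lia.
have -> : (a + p + j.+1 = a + j.+1 + p)%N by lia.
by apply: conj_gen_iota_pair; lia.
Qed.

Lemma shuffle_swap :
  word (shuffle a p q) * (word (iota a.+1 p.-1) * word (iota (a + p).+1 q.-1)) =±
  word (iota a.+1 q.-1) * word (iota (a + q).+1 p.-1) * word (shuffle a p q).
Proof.
have low : word (shuffle a p q) * word (iota a.+1 p.-1) =±
           word (iota (a + q).+1 p.-1) * word (shuffle a p q).
  rewrite -(addn1 a) -(addn1 (a + q)) !iotaDl; apply: conj_gen_map => i; rewrite mem_iota => hi.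
  by rewrite addnAC; apply: conj_gen_shuffle_low; lia.
have high : word (shuffle a p q) * word (iota (a + p).+1 q.-1) =±
            word (iota a.+1 q.-1) * word (shuffle a p q).
  rewrite -(addn1 a) -(addn1 (a + p)) !iotaDl; apply: conj_gen_map => j; rewrite mem_iota => hj.
  by apply: conj_gen_shuffle_high; lia.
have far_blocks : word (iota (a + q).+1 p.-1) * word (iota a.+1 q.-1) =±
                  word (iota a.+1 q.-1) * word (iota (a + q).+1 p.-1).
  symmetry; apply: (word_sign_commute_between _ _ (iota_between a q) (iota_between (a + q) p));
  lia.
by rewrite mulrA low -mulrA high mulrA far_blocks.
Qed.
End Shuffle.

Definition sign_conj (lo hi : nat) (x y : A) :=
  exists2 s, all (between lo hi) s & word s * x =± y * word s.

Lemma sign_conj_refl lo hi x : sign_conj lo hi x x.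
Proof. by exists [::]; rewrite // word_nil mul1r mulr1. Qed.

Lemma sign_conj_trans lo hi x y z :
  sign_conj lo hi x y -> sign_conj lo hi y z -> sign_conj lo hi x z.
Proof.
case=> s1 hs1 e1 [s2 hs2 e2]; exists (s2 ++ s1); first by rewrite all_cat hs1 hs2.
by rewrite word_cat -mulrA e1 mulrA e2 mulrA.
Qed.

Lemma sign_conj_widen lo hi lo' hi' x y : (lo' <= lo)%N -> (hi <= hi')%N ->
  sign_conj lo hi x y -> sign_conj lo' hi' x y.
Proof.
move=> lo'lo hihi' [s hs e]; exists s => //.
by apply: sub_all hs => i; rewrite /between; lia.
Qed.

Lemma sign_conj_mull lo hi s x y : (lo <= hi <= n)%N -> all (between 0 lo) s ->
  sign_conj lo hi x y -> sign_conj lo hi (word s * x) (word s * y).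
Proof.
move=> hin hs [s' hs' e]; exists s' => //.
have c : word s * word s' =± word s' * word s 
  by apply: (word_sign_commute_between _ _ hs hs'); lia.
by rewrite mulrA -c -mulrA e mulrA.
Qed.

Lemma sign_conj_mulr lo hi s x y : (hi <= n)%N -> all (between hi n) s ->
  sign_conj lo hi x y -> sign_conj lo hi (x * word s) (y * word s).
Proof.
move=> hin hs [s' hs' e]; exists s' => //.
have c : word s' * word s =± word s * word s' 
  by apply: (word_sign_commute_between _ _ hs' hs); lia.
by rewrite mulrA e -mulrA c mulrA.
Qed.

Definition block (a x : nat) : A := word (iota a.+1 x.-1).

Lemma block_swap a x y : (a + x + y <= n)%N ->
  sign_conj a (a + x + y) (block a x * block (a + x) y) (block a y * block (a + y) x).
Proof.
move=> axyn; exists (shuffle a x y); first by rewrite addnAC; apply: shuffle_between.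
exact: shuffle_swap.
Qed.

Fixpoint comp_index (a : nat) (g : seq nat) : seq nat :=
  if g is x :: g' then iota a.+1 x.-1 ++ comp_index (a + x) g' else [::].

Definition comp_word (a : nat) (g : seq nat) : A := word (comp_index a g).

Lemma comp_word_cons a x g : comp_word a (x :: g) = block a x * comp_word (a + x) g.
Proof. exact: word_cat. Qed.

Lemma comp_index_cat a g1 g2 :
  comp_index a (g1 ++ g2) = comp_index a g1 ++ comp_index (a + sumn g1) g2.
Proof. by elim: g1 a => [|x g IH] a /=; rewrite ?addn0 // IH catA addnA. Qed.

Lemma comp_word_cat a g1 g2 :
  comp_word a (g1 ++ g2) = comp_word a g1 * comp_word (a + sumn g1) g2.
Proof. by rewrite /comp_word comp_index_cat word_cat. Qed.

Lemma comp_index_between a g : all (between a (a + sumn g)) (comp_index a g).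
Proof.
elim: g a => [|x g IH] a //=; rewrite all_cat; apply/andP; split.
  by apply/allP => i; rewrite mem_iota /between; lia.
by apply: sub_all (IH _) => i; rewrite /between; lia.
Qed.

Lemma size_comp_index a g : all (fun x => 0 < x)%N g ->
  (size (comp_index a g) + size g)%N = sumn g.
Proof.
elim: g a => [|x g IH] a //= /andP[x0 g0]; rewrite size_cat size_iota.
have := IH (a + x)%N g0; lia.
Qed.

Definition comp_conj (g g' : seq nat) := sumn g = sumn g' /\
  forall a, (a + sumn g <= n)%N -> sign_conj a (a + sumn g) (comp_word a g) (comp_word a g').

Lemma comp_conj_cons x g g' : comp_conj g g' -> comp_conj (x :: g) (x :: g').
Proof.
case=> eg hg; split=> [|a /= axgn]; first by rewrite /= eg.
rewrite !comp_word_cons addnA.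
apply: sign_conj_widen (sign_conj_mull _ _ (hg _ _)); try lia.
by apply/allP => i; rewrite mem_iota /between; lia.
Qed.

Lemma comp_conj_swap x y g : comp_conj [:: x, y & g] [:: y, x & g].
Proof.
split=> [|a /= axygn]; first by rewrite /= addnCA.
rewrite !comp_word_cons !mulrA (addnAC a y x) !addnA.
apply: sign_conj_widen (sign_conj_mulr _ _ (block_swap _)); try lia.
by apply: sub_all (comp_index_between _ _) => i; rewrite /between; lia.
Qed.

Lemma comp_conj_perm g g' : perm_eq g g' -> comp_conj g g'.
Proof.
apply: perm_eq_ind_swap => [s | s1 s2 s3 [e12 h12] [e23 h23] | | ].
- by split=> // a _; apply: sign_conj_refl.
- split=> [|a an]; first by rewrite e12.
  by apply: sign_conj_trans (h12 a an) _; rewrite e12; apply: h23; rewrite -e12.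
- exact: comp_conj_cons.
- exact: comp_conj_swap.
Qed.

Lemma even_block_anticomm g1 x g2 : let g := g1 ++ x :: g2 in
  all (fun k => 0 < k)%N g -> (sumn g <= n)%N -> ~~ odd x -> ~~ odd (sumn g - size g) ->
  block (sumn g1) x * (comp_word (sumn g1 + x) g2 * comp_word 0 g1) =
  - (comp_word (sumn g1 + x) g2 * comp_word 0 g1 * block (sumn g1) x).
Proof.
rewrite /= all_cat sumn_cat size_cat /= => /andP[pos1 /andP[x0 pos2]] gn xev gev.
have size1 := size_comp_index 0 pos1; have size2 := size_comp_index (sumn g1 + x) pos2.
have between1 := comp_index_between 0 g1; have between2 := comp_index_between (sumn g1 + x) g2.
rewrite /comp_word -word_cat /block word_commute.
- rewrite -signr_odd size_iota size_cat oddM (_ : odd x.-1 = true) 1?(_ : odd (_ + _) = true);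
    by rewrite ?expr1 ?mulN1r //; lia.
- by apply: all_gen_iota; lia.
- rewrite all_cat; apply/andP; split; [apply: sub_all between2 | apply: sub_all between1];
    by move=> i; rewrite /between; lia.
- apply/allrelP => i j; rewrite mem_iota mem_cat => hi /orP[/(allP between2) | /(allP between1)];
    by rewrite /between /far; lia.
Qed.

End SpinSymmetricGroup.

Section CommutatorSpan.
Variable A : algType CC.
Implicit Types u v w x : A.

Lemma comm_span_commutator u v : in_comm_span (u * v - v * u).
Proof. by exists [:: (1, (u, v))]; rewrite big_seq1 scale1r. Qed.

Lemma comm_spanD u v : in_comm_span u -> in_comm_span v -> in_comm_span (u + v).
Proof. by case=> s1 -> [s2 ->]; exists (s1 ++ s2); rewrite big_cat. Qed.

Lemma comm_spanZ c u : in_comm_span u -> in_comm_span (c *: u).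
Proof.
case=> s ->; exists [seq (c * p.1, p.2) | p <- s].
by rewrite big_map scaler_sumr; apply: eq_bigr => p _; rewrite scalerA.
Qed.

Lemma comm_spanB u v : in_comm_span u -> in_comm_span v -> in_comm_span (u - v).
Proof. by move=> hu hv; rewrite -scaleN1r; apply: comm_spanD (comm_spanZ _ hv). Qed.

Lemma comm_span_sub_conj u v x : u * v = 1 -> in_comm_span (x - v * x * u).
Proof. by move=> uv; have := comm_span_commutator u (v * x); rewrite mulrA uv mul1r. Qed.

(* [CC] is only exposed as a fieldType; its order structure is that of [R[i]]. *)
Lemma two_neq0 : (2 : CC) != 0.
Proof. by have : (2 : Rdefinitions.R[i]) != 0 by rewrite pnatr_eq0. Qed.

Lemma comm_span_anticomm x y w : y * (w * x) = - (w * x * y) -> in_comm_span (x * y * w).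
Proof.
move=> anti.
have -> : x * y * w = (2 : CC)^-1 *: ((x * (y * w) - y * w * x) - (w * (x * y) - x * y * w)).
  rewrite -(mulrA y) anti !mulrA opprK opprB addrACA subrr addr0 -mulr2n.
by rewrite -scalerMnr scalerMnl -mulr_natr mulVf ?two_neq0 ?scale1r.
by apply: comm_spanZ; apply: comm_spanB; apply: comm_span_commutator.
Qed.

End CommutatorSpan.

Lemma comm_span_lrmorph (A B : algType CC) (f : {lrmorphism A -> B}) v :
  in_comm_span v -> in_comm_span (f v).
Proof.
case=> s ->; exists [seq (p.1, (f p.2.1, f p.2.2)) | p <- s].
by rewrite linear_sum big_map; apply: eq_bigr => p _; rewrite linearZ rmorphB !rmorphM.
Qed.

Lemma t_comp_fromE (A : algType CC) (t : nat -> A) a g : t_comp_from t a g = comp_word t a g.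
Proof.
elim: g a => [|x g IH] a /=; first by rewrite /comp_word word_nil.
rewrite comp_word_cons IH /block /word /index_iota.
by congr (\big[_/_]_(j <- iota _ _) _ * _); lia.
Qed.

Section SpinHecke.
Variables (A : algType CC) (n : nat) (t b : nat -> A).
Hypothesis rel : spin_hecke_rel n t b.

Lemma spin_hecke_sq i : (0 < i < n)%N -> t i * t i = 1.
Proof. by move=> i0n; case: rel => sq _; apply: sq; lia. Qed.

Lemma spin_hecke_braid i : (0 < i)%N -> (i.+1 < n)%N ->
  t i * t i.+1 * t i = t i.+1 * t i * t i.+1.
Proof. by move=> i0 in_; case: rel => _ [braid _]; apply: braid; lia. Qed.

Lemma spin_hecke_anti i j : (0 < i)%N -> (j < n)%N -> (i.+1 < j)%N ->
  t i * t j = - (t j * t i).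
Proof.
move=> i0 jn ij; case: rel => _ [_ [sq2 _]].
have unit : t i * t j * (t j * t i) = 1.
  by rewrite mulrA -(mulrA (t i)) (spin_hecke_sq (i := j)) ?mulr1 ?spin_hecke_sq //; lia.
by rewrite -[LHS]mulr1 -unit mulrA -expr2 sq2 ?mulN1r ?ij //; lia.
Qed.

Lemma t_comp_even_comm_span g : all (fun k => 0 < k)%N g -> sumn g = n ->
  ~~ odd (n - size g) -> has (fun k => ~~ odd k) g -> in_comm_span (t_comp t g).
Proof.
move=> pos sum gev /hasP[x xg xev]; case/splitPr: g / xg pos sum gev => g1 g2 pos sum gev.
rewrite /t_comp t_comp_fromE comp_word_cat comp_word_cons add0n mulrA.
apply: comm_span_anticomm; apply: (even_block_anticomm spin_hecke_anti); rewrite ?sum //.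
Qed.

Lemma t_comp_perm_comm_span g g' : sumn g = n -> perm_eq g g' ->
  exists e : bool, in_comm_span (t_comp t g - (-1) ^+ e *: t_comp t g').
Proof.
move=> sum perm; have [_ conj] := comp_conj_perm spin_hecke_braid spin_hecke_anti perm.
have := conj 0%N; rewrite add0n sum => /(_ (leqnn n)) [s gs [e he]].
exists e; rewrite /t_comp !t_comp_fromE.
have -> : (-1) ^+ e *: comp_word t 0 g' = word t s * comp_word t 0 g * word t (rev s).
  by rewrite he -!mulrA (word_Krev spin_hecke_sq gs) mulr1 scaler_sign mulr_sign.
exact: comm_span_sub_conj (word_revK spin_hecke_sq gs).
Qed.

End SpinHecke.

Lemma rmorph_t_comp_from (A B : algType CC) (f : {rmorphism A -> B}) (t : nat -> A) a g :
  f (t_comp_from t a g) = t_comp_from (f \o t) a g.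
Proof. by elim: g a => [|x g IH] a /=; rewrite ?rmorph1 // rmorphM rmorph_prod IH. Qed.

Lemma spin_hecke_rel_pair (A1 A2 : algType CC) n (t1 b1 : nat -> A1) (t2 b2 : nat -> A2) :
  spin_hecke_rel n t1 b1 -> spin_hecke_rel n t2 b2 ->
  spin_hecke_rel n (fun i => (t1 i, t2 i)) (fun i => (b1 i, b2 i)).
Proof.
case=> [a1 [a2 [a3 [a4 [a5 a6]]]]] [c1 [c2 [c3 [c4 [c5 c6]]]]].
split; [|split; [|split; [|split; [|split]]]] => *; apply: injective_projections => /=;
  rewrite -?expr2.
- exact: a1.
- exact: c1.
- exact: a2.
- exact: c2.
- exact: a3.
- exact: c3.
- exact: a4.
- exact: c4.
- exact: a5.
- exact: c5.
- exact: a6.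
- exact: c6.
Qed.

Lemma t_comp_perm_common_sign (A1 A2 : algType CC) n (t1 b1 : nat -> A1) (t2 b2 : nat -> A2)
    g g' : spin_hecke_rel n t1 b1 -> spin_hecke_rel n t2 b2 -> sumn g = n -> perm_eq g g' ->
  exists e : bool, in_comm_span (t_comp t1 g - (-1) ^+ e *: t_comp t1 g') /\
                   in_comm_span (t_comp t2 g - (-1) ^+ e *: t_comp t2 g').
Proof.
move=> rel1 rel2 sum perm.
have [e he] := t_comp_perm_comm_span (spin_hecke_rel_pair rel1 rel2) sum perm.
exists e; split.
- by have := comm_span_lrmorph fst he; rewrite /= /t_comp !rmorph_t_comp_from.
- by have := comm_span_lrmorph snd he; rewrite /= /t_comp !rmorph_t_comp_from.
Qed.

Lemma exists_common_bool (I : Type) (P : I -> bool -> Prop) :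
  (forall i j, exists b, P i b /\ P j b) -> exists b, forall i, P i b.
Proof.
move=> common; case: (classic (forall i, P i false)) => [all_false | ]; first by exists false.
case/not_all_ex_not => i0 not_false; exists true => i.
by case: (common i0 i) => [[] [h0 hi]] //; case: not_false.
Qed.

Theorem proposition7p1p1 (n : nat) (gamma : seq nat) :
  is_composition n gamma ->
  ~~ odd (n - size gamma) ->
  let mu := comp_sort gamma in
  (has (fun k => ~~ odd k) mu ->
     forall (A : algType CC) (t b : nat -> A),
       spin_hecke_rel n t b -> in_comm_span (t_comp t gamma)) /\
  (all odd mu ->
     exists eps : CC, (eps = 1 \/ eps = -1) /\
       forall (A : algType CC) (t b : nat -> A),
         spin_hecke_rel n t b ->
         in_comm_span (t_comp t gamma - eps *: t_comp t mu)).
Proof.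
move=> /andP[pos /eqP sum] gev mu; have perm : perm_eq gamma mu by rewrite perm_sym perm_sort.
split=> [even_part A t b rel | _].
  by apply: (t_comp_even_comm_span rel) => //; rewrite (perm_has _ perm).
pose model := {A : algType CC & {tb : (nat -> A) * (nat -> A) | spin_hecke_rel n tb.1 tb.2}}.
have [e he] : exists e : bool, forall m : model,
    in_comm_span (t_comp (sval (projT2 m)).1 gamma - (-1) ^+ e *: t_comp (sval (projT2 m)).1 mu).
  apply: exists_common_bool => -[A1 [[t1 b1] rel1]] [A2 [[t2 b2] rel2]].
  exact: t_comp_perm_common_sign rel1 rel2 sum perm.
exists ((-1) ^+ e); split; first by case: e {he}; [right | left].
by move=> A t b rel; apply: (he (existT _ A (exist _ (t, b) rel))).
Qed.
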